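(* Let $M,N:\Sigma\to c(X)$ be multimeasures with $M\ll N$, and assume that $N$ satisfies the countable chain condition. Then for every $A\in\Sigma\setminus\mathcal N(M)$ there exists $B\in\Sigma\setminus\mathcal N(M)$ with $B\subseteq A$ such that $N\ll M$ on $\Sigma_B$, i.e. every $E\in\Sigma_B$ with $M(E)=\{0\}$ satisfies $N(E)=\{0\}$.
   Context: $(\Omega,\Sigma)$ is a measurable space and $X$ is a Hausdorff locally convex space with dual $X'$. $c(X)$ is the family of nonempty closed convex subsets of $X$; $s(x',C)=\sup\{\langle x',x\rangle:x\in C\}$. A multimeasure is a map $M:\Sigma\to c(X)$ such that for every $x'\in X'$ the set function $E\mapsto s(x',M(E))$ is a $\sigma$-finite countably additive measure with values in $(-\infty,+\infty]$. $\mathcal N(M)=\{E\in\Sigma:M(E)=\{0\}\}$. $M\ll N$ means $\mathcal N(N)\subseteq\mathcal N(M)$. $\Sigma_B=\{E\in\Sigma:E\subseteq B\}$. A multimeasure $N$ satisfies the countable chain condition (ccc) if every family of pairwise disjoint sets in $\Sigma\setminus\mathcal N(N)$ is at most countable. *)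

From HB Require Import structures.
From mathcomp Require Import all_boot all_order all_algebra.
From mathcomp Require Import all_classical all_reals all_analysis.
Set Implicit Arguments. Unset Strict Implicit. Unset Printing Implicit Defensive.
Import Order.TTheory GRing.Theory Num.Theory.
Import numFieldTopology.Exports numFieldNormedType.Exports.
Local Open Scope classical_set_scope.
Local Open Scope ring_scope.

Section multimeasure_defs.
Context {R : realType} {X : tvsType R}.

Definition dual_elt (f : X -> R) : Prop :=
  (forall (a : R) (x y : X), f (a *: x + y) = a * f x + f y) /\ continuous f.

Definition cX (C : set X) : Prop :=
  C !=set0 /\ closed C /\ @convex_set R X C.

Definition supp_fun (f : X -> R) (C : set X) : \bar R :=
  ereal_sup [set (f x)%:E | x in C].

Context {d : measure_display} {T : measurableType d}.

Definition multimeasure (M : set T -> set X) : Prop :=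
  (forall E, measurable E -> cX (M E)) /\
  forall f, dual_elt f ->
    let mu := fun E => supp_fun f (M E) in
    [/\ mu set0 = 0%E,
        (forall E, measurable E -> mu E != -oo%E),
        semi_sigma_additive mu &
        sigma_finite setT mu].

Definition null_sets (M : set T -> set X) : set (set T) :=
  [set E | measurable E /\ M E = [set 0]].

Definition mabs_cont (M N : set T -> set X) : Prop :=
  null_sets N `<=` null_sets M.

Definition ccc (N : set T -> set X) : Prop :=
  forall F : set (set T),
    (forall A, F A -> measurable A /\ ~ null_sets N A) ->
    (forall A B, F A -> F B -> A <> B -> A `&` B = set0) ->
    countable F.
End multimeasure_defs.

From HB Require Import structures.
From mathcomp Require Import all_boot all_order all_algebra.
From mathcomp Require Import all_classical all_reals all_analysis.
From mathcomp Require Import ring lra.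
Set Implicit Arguments. Unset Strict Implicit. Unset Printing Implicit Defensive.
Import Order.TTheory GRing.Theory Num.Theory.
Import numFieldTopology.Exports numFieldNormedType.Exports.
Local Open Scope classical_set_scope.
Local Open Scope ring_scope.

(* Call a measurable E included in A "bad" when
   M(E) = {0} but N(E) <> {0}.  By Zorn's lemma there is a maximal family F
   of pairwise disjoint bad sets; by the countable chain condition of N it is
   countable, so its union E0 is a countable disjoint union of M-null sets,
   hence M-null.  Then B := A \ E0 works: if M(B) = {0}, A = B u E0 would be
   M-null; and a bad subset of B would be disjoint from all members of F,
   contradicting maximality.

   That countable disjoint unions of M-null sets are M-null follows from the
   sigma-additivity of the support functions s(x', M(.)) once we know that a
   nonempty set whose support functions all vanish is {0}, i.e. that the dual
   of a Hausdorff locally convex space separates points.  This form of the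
   Hahn-Banach theorem is proved first: a linear form equal to 1 at a point x0
   outside a convex absorbing set U and bounded by 1 on U is obtained by Zorn's
   lemma on graphs of partially defined dominated linear forms. *)

Section linear_form.
Context {R : numDomainType} {X : lmodType R}.

Definition linear_form (f : X -> R) : Prop :=
  forall (a : R) (u v : X), f (a *: u + v) = a * f u + f v.

Lemma linear_form0 f : linear_form f -> f 0 = 0.
Proof.
move=> flin; have := flin 1 0 0; rewrite scale1r addr0 mul1r.
by move=> /(congr1 (fun t => t - f 0)) /=; rewrite subrr addrK.
Qed.

Lemma linear_formN f u : linear_form f -> f (- u) = - f u.
Proof.
by move=> flin; have := flin (-1) u 0; rewrite scaleN1r addr0 linear_form0 // addr0 mulN1r.
Qed.

End linear_form.

Section hahn_banach.
Context {R : realType} {X : lmodType R}.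

Lemma convex_comb (U : set X) : convex_set U ->
  forall x y (l : R), U x -> U y -> 0 <= l -> l <= 1 -> U (l *: x + (1 - l) *: y).
Proof.
move=> cU x y l Ux Uy l0 l1.
by have := cU x y (Itv01 l0 l1) (mem_set Ux) (mem_set Uy); rewrite inE.
Qed.

Variables (U : set X) (x0 : X).
Hypotheses (cU : convex_set U) (U0 : U 0) (nUx0 : ~ U x0).
Hypothesis absorbing : forall y : X, exists t : R, [/\ 0 < t, U (t *: y) & U (- (t *: y))].

Definition dominated_graph (G : set (X * R)) : Prop :=
 [/\ G (x0, 1),
   (forall z r s, G (z, r) -> G (z, s) -> r = s),
   (forall a z r w s, G (z, r) -> G (w, s) -> G (a *: z + w, a * r + s)) &
   (forall z r, G (z, r) -> U z -> r <= 1)].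

Lemma dominated_graph0 G : dominated_graph G -> G (0, 0).
Proof.
case=> Gx _ Gl _; have := Gl (-1) _ _ _ _ Gx Gx.
by rewrite scaleN1r addNr mulN1r addNr.
Qed.

Lemma dominated_graph_comb G a b z r w s : dominated_graph G ->
  G (z, r) -> G (w, s) -> G (a *: z + b *: w, a * r + b * s).
Proof.
move=> gG Gz Gw; have [_ _ Gl _] := gG.
have := Gl b _ _ _ _ Gw (dominated_graph0 gG); rewrite !addr0 => Gbw.
exact: Gl.
Qed.

Definition line_graph : set (X * R) := [set p | exists t, p = (t *: x0, t)].

Lemma line_graph_dominated : dominated_graph line_graph.
Proof.
have x0_neq0 : x0 != 0 by apply/eqP => x00; apply: nUx0; rewrite x00.
split.
- by exists 1; rewrite scale1r.
- move=> z r s [t [-> ->]] [t' [e ->]].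
  apply/eqP; rewrite -subr_eq0; apply/eqP.
  have : (t - t') *: x0 == 0 by rewrite scalerBl e subrr.
  by rewrite scaler_eq0 (negbTE x0_neq0) orbF => /eqP.
- move=> a z r w s [t [-> ->]] [t' [-> ->]].
  by exists (a * t + t'); rewrite scalerDl scalerA.
- move=> z r [t [-> ->]] Ut; rewrite leNgt; apply/negP => t1; apply: nUx0.
  have t0 : 0 < t by apply: lt_trans t1.
  have := convex_comb cU (l := t^-1) Ut U0.
  rewrite scaler0 addr0 scalerA mulVf ?gt_eqF// scale1r; apply.
    by rewrite invr_ge0 ltW.
  by rewrite invf_le1 // ltW.
Qed.

Lemma dominated_chain_bigcup (F : set (set (X * R))) G1 :
  (forall G, F G -> G = set0 \/ dominated_graph G) -> total_on F subset ->
  F G1 -> dominated_graph G1 -> dominated_graph (\bigcup_(G in F) G).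
Proof.
move=> FP Ftot FG1 [G1x _ _ _].
have Fg G p : F G -> G p -> dominated_graph G.
  by move=> FG Gp; case: (FP G FG) => // G0; rewrite G0 in Gp.
split.
- by exists G1.
- move=> z r s [Ga Fa Ar] [Gb Fb Bs].
  have [ab|ba] := Ftot _ _ Fa Fb.
    by have [_ Gf _ _] := Fg _ _ Fb Bs; exact: Gf (ab _ Ar) Bs.
  by have [_ Gf _ _] := Fg _ _ Fa Ar; exact: Gf Ar (ba _ Bs).
- move=> a z r w s [Ga Fa Ar] [Gb Fb Bs].
  have [ab|ba] := Ftot _ _ Fa Fb.
    by have [_ _ Gl _] := Fg _ _ Fb Bs; exists Gb => //; exact: Gl (ab _ Ar) Bs.
  by have [_ _ Gl _] := Fg _ _ Fa Ar; exists Ga => //; exact: Gl Ar (ba _ Bs).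
- by move=> z r [Ga Fa Ar] Uz; have [_ _ _ Gb] := Fg _ _ Fa Ar; exact: Gb Ar Uz.
Qed.

Section one_step_extension.
Variables (A : set (X * R)) (y : X).
Hypotheses (gA : dominated_graph A) (ny : ~ exists r, A (y, r)).

(* Admissible values c for the extension to y: lower and upper slopes. *)
Definition lower_slopes : set R :=
  [set l | exists d r t, [/\ A (d, r), 0 < t, U (d - t *: y) & l = (r - 1) / t]].
Definition upper_slopes : set R :=
  [set h | exists d r t, [/\ A (d, r), 0 < t, U (d + t *: y) & h = (1 - r) / t]].

(* Every lower slope is below every upper slope, by convexity of U. *)
Lemma slopes_ordered d1 r1 t1 d2 r2 t2 :
  A (d1, r1) -> 0 < t1 -> U (d1 + t1 *: y) ->
  A (d2, r2) -> 0 < t2 -> U (d2 - t2 *: y) -> (r2 - 1) / t2 <= (1 - r1) / t1.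
Proof.
move=> A1 t10 U1 A2 t20 U2.
have s0 : 0 < t1 + t2 by rewrite addr_gt0.
pose l := t1 / (t1 + t2).
have l0 : 0 <= l by rewrite divr_ge0 // ltW.
have l1 : l <= 1 by rewrite ler_pdivrMr // mul1r lerDl ltW.
have El : (1 - l) * t1 = l * t2 by rewrite /l; field; rewrite gt_eqF.
have := convex_comb cU U2 U1 l0 l1.
rewrite scalerBr scalerDr !scalerA El addrACA addNr addr0 => Uv.
have [_ _ _ Gb] := gA.
have H : l * r2 + (1 - l) * r1 <= 1.
  exact: Gb _ _ (dominated_graph_comb l (1 - l) gA A2 A1) Uv.
have H2 : t1 * r2 + t2 * r1 <= t1 + t2.
  have -> : t1 * r2 + t2 * r1 = (l * r2 + (1 - l) * r1) * (t1 + t2).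
    by rewrite /l; field; rewrite gt_eqF.
  by rewrite -[leRHS]mul1r ler_pM2r.
rewrite ler_pdivrMr // mulrAC ler_pdivlMr //.
nra.
Qed.

Lemma slope_between :
  exists c, (forall l, lower_slopes l -> l <= c) /\ (forall h, upper_slopes h -> c <= h).
Proof.
have [t [t0 Uty Umty]] := absorbing y.
have A00 := dominated_graph0 gA.
have Lne : lower_slopes !=set0.
  by exists ((0 - 1) / t), 0, 0, t; split => //; rewrite sub0r.
have Hne : upper_slopes ((1 - 0) / t) by exists 0, 0, t; split => //; rewrite add0r.
have LH l h : lower_slopes l -> upper_slopes h -> l <= h.
  move=> [d2 [r2 [t2 [A2 t20 U2 ->]]]] [d1 [r1 [t1 [A1 t10 U1 ->]]]].
  exact: (slopes_ordered A1 t10 U1 A2 t20 U2).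
exists (sup lower_slopes); split => [l Ll|h Hh].
  by apply: ub_le_sup => //; exists ((1 - 0) / t) => l' Ll'; exact: LH.
by apply: ge_sup => // l' Ll'; exact: LH.
Qed.

Variable c : R.
Hypotheses (cL : forall l, lower_slopes l -> l <= c)
  (cH : forall h, upper_slopes h -> c <= h).

Definition ext_graph : set (X * R) :=
  [set p | exists d r t, A (d, r) /\ p = (d + t *: y, r + t * c)].

Lemma ext_graph_dominated : dominated_graph ext_graph.
Proof.
have [Ax Af Al Ab] := gA.
split.
- by exists x0, 1, 0; split => //; rewrite scale0r addr0 mul0r addr0.
- move=> z r s [d [r' [t [Ad [-> ->]]]]] [d' [s' [t' [Ad' [e ->]]]]].
  have [tt|tt] := eqVneq t t'.
    by subst t'; move/addIr: e => e; subst d'; rewrite (Af _ _ _ Ad Ad').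
  exfalso; apply: ny.
  have e2 : (t - t') *: y = d' - d.
    rewrite scalerBl.
    have -> : t *: y = d' + t' *: y - d by rewrite -e addrAC subrr add0r.
    by rewrite addrAC addrK.
  exists ((t - t')^-1 * s' + (- (t - t')^-1) * r').
  have := dominated_graph_comb ((t - t')^-1) (- (t - t')^-1) gA Ad' Ad.
  by rewrite scaleNr -scalerBr -e2 scalerA mulVf ?scale1r // subr_eq0.
- move=> a z r w s [d [r' [t [Ad [-> ->]]]]] [d' [s' [t' [Ad' [-> ->]]]]].
  exists (a *: d + d'), (a * r' + s'), (a * t + t'); split; first exact: Al.
  congr (_, _); last by ring.
  by rewrite scalerDr scalerA scalerDl addrACA.
- move=> z r [d [r' [t [Ad [-> ->]]]]] Uz.
  have [t0|t0|t0] := ltgtP t 0.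
  + have : lower_slopes ((r' - 1) / (- t)).
      exists d, r', (- t); split => //; first by rewrite oppr_gt0.
      by rewrite scaleNr opprK.
    by move/cL; rewrite ler_pdivrMr ?oppr_gt0 // => h; nra.
  + have : upper_slopes ((1 - r') / t) by exists d, r', t.
    by move/cH; rewrite ler_pdivlMr // => h; nra.
  + by subst t; rewrite mul0r addr0; apply: Ab Ad _; rewrite scale0r addr0 in Uz.
Qed.

Lemma ext_graph_proper : A `<` ext_graph.
Proof.
split.
  by move=> [z r] Az; exists z, r, 0; split => //; rewrite scale0r addr0 mul0r addr0.
move=> sB; apply: ny; exists c; apply: sB.
exists 0, 0, 1; split; first exact: dominated_graph0 gA.
by rewrite add0r scale1r add0r mul1r.
Qed.

End one_step_extension.

(* Zorn: some dominated graph is defined on all of X, since a maximal one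
   admits no one-step extension. *)
Lemma total_dominated_graph :
  exists G, dominated_graph G /\ forall z, exists r, G (z, r).
Proof.
pose P G := G = set0 \/ dominated_graph G.
have chainP F : F `<=` P -> total_on F subset -> P (\bigcup_(G in F) G).
  move=> FP Ftot.
  have [[G1 [FG1 [p G1p]]]|Fe] := pselect (exists G, F G /\ G !=set0).
    right; apply: (dominated_chain_bigcup FP Ftot FG1).
    by case: (FP G1 FG1) => // G10; rewrite G10 in G1p.
  left; apply/seteqP; split => // p [G FG Gp].
  by apply: Fe; exists G; split => //; exists p.
have [A [PA Amax]] := Zorn_bigcup chainP.
have gA : dominated_graph A.
  case: PA => // A0; exfalso; apply: (Amax line_graph); last first.
    by right; exact: line_graph_dominated.
  rewrite A0; split => // sub; have := sub (x0, 1); apply; by exists 1; rewrite scale1r.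
exists A; split => // z; apply: contrapT => nz.
have [c [cL cH]] := slope_between z gA.
apply: (Amax _ (ext_graph_proper gA nz c)); right.
exact: ext_graph_dominated gA nz c cL cH.
Qed.

Lemma dominated_linear_form :
  exists f : X -> R, [/\ linear_form f, f x0 = 1 & forall u, U u -> f u <= 1].
Proof.
have [A [[Ax Af Al Ab] Atot]] := total_dominated_graph.
pose f z := xget 0 [set r | A (z, r)].
have Afz z : A (z, f z) by exact: (xgetPex 0 (Atot z)).
exists f; split.
- by move=> a u v; apply: (Af (a *: u + v)); [exact: Afz | exact: Al].
- exact: Af (Afz x0) Ax.
- by move=> u Uu; exact: Ab (Afz u) Uu.
Qed.

End hahn_banach.

Section separation.
Context {R : realType} {X : tvsType R}.

(* Neighbourhoods of 0 are absorbing (continuity of scalar multiplication). *)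
Lemma nbhs0_absorbing (U : set X) : nbhs (0 : X) U ->
  forall y : X, exists t : R, [/\ 0 < t, U (t *: y) & U (- (t *: y))].
Proof.
move=> U0 y.
have /= := scale_continuous ((0 : R^o), y) U.
rewrite scale0r => /(_ U0)[] /= B [B1 B2] BU.
have /nbhs_ballP [e /= e0 He] := B1.
have e2_ball : `|e / 2| < e.
  by rewrite ger0_norm ?divr_ge0 ?ltW // ltr_pdivrMr // ltr_pMr // ltr1n.
exists (e / 2); split; first by rewrite divr_gt0.
  apply: (BU (e / 2, y)); split => //; last exact: nbhs_singleton.
  by apply: He; rewrite /ball /= sub0r normrN.
rewrite -scaleNr; apply: (BU (- (e / 2), y)); split => //; last exact: nbhs_singleton.
by apply: He; rewrite /ball /= sub0r opprK.
Qed.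

Lemma linear_form_continuous (f : X -> R) (U : set X) :
  linear_form f -> nbhs (0 : X) U -> (forall u, U u -> f u <= 1) -> continuous f.
Proof.
move=> flin U0 fU.
pose V := U `&` (-%R @` U).
have V0 : nbhs (0 : X) V by apply: filterI => //; exact: nbhs0N.
have fV v : V v -> `|f v| <= 1.
  move=> [Uv [u Uu uv]]; rewrite ler_norml fU // andbT.
  by rewrite -uv linear_formN // lerN2 fU.
move=> z; apply/cvgrPdist_lt => e e0.
have e2 : e / 2 != 0 by rewrite gt_eqF // divr_gt0.
apply: filterS (nbhsT z (nbhs0Z e2 V0)) => w [_ [v Vv <-] <-].
rewrite [z + _]addrC flin opprD addrCA subrr addr0 normrN normrM.
rewrite ger0_norm ?divr_ge0 ?ltW //.
apply: (le_lt_trans (ler_wpM2l _ (fV v Vv))); first by rewrite divr_ge0 ?ltW.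
by rewrite mulr1 ltr_pdivrMr // ltr_pMr // ltr1n.
Qed.

Lemma separate_point (hX : hausdorff_space X) (x : X) : x != 0 ->
  exists f : X -> R, dual_elt f /\ f x = 1.
Proof.
move=> x0.
have [A0 [B [A0n Bn AB]]] : exists A0 B, [/\ nbhs (0 : X) A0, nbhs x B & A0 `&` B = set0].
  apply: contrapT => H; move/eqP: x0; apply; symmetry; apply: hX => A0 B hA hB.
  apply: contrapT => ne; apply: H; exists A0, B; split => //.
  by apply/seteqP; split => // p Hp; apply: ne; exists p.
have [Bs Bconv [Bopen Bnb]] := @locally_convex R X.
have [b [Bsb b0] bA] := Bnb 0 A0 A0n.
have cb : convex_set b by apply: Bconv; rewrite inE.
have bn : nbhs (0 : X) b by apply: open_nbhs_nbhs; split => //; exact: Bopen.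
have nbx : ~ b x.
  move=> bx; have : (A0 `&` B) x by split; [exact: bA | exact: nbhs_singleton].
  by rewrite AB.
have [f [flin fx fb]] := dominated_linear_form cb b0 nbx (nbhs0_absorbing bn).
by exists f; split => //; split => //; exact: linear_form_continuous bn fb.
Qed.

Lemma supp_fun_set0 (f : X -> R) : dual_elt f -> supp_fun f [set 0] = 0%E.
Proof.
by move=> [flin _]; rewrite /supp_fun image_set1 ereal_sup1 linear_form0.
Qed.

Lemma supp_fun_eq0 (hX : hausdorff_space X) (C : set X) : C !=set0 ->
  (forall f, dual_elt f -> supp_fun f C = 0%E) -> C = [set 0].
Proof.
move=> [p Cp] C0f.
have C0 q : C q -> q = 0.
  move=> Cq; apply/eqP; apply: contrapT => /negP q0.
  have [f [df fq]] := separate_point hX q0.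
  have : ((f q)%:E <= supp_fun f C)%E by apply: ereal_sup_ubound; exists q.
  by rewrite C0f // fq lee_fin ler10.
by apply/seteqP; split => [q /C0 -> //|q ->]; rewrite -(C0 p Cp).
Qed.

End separation.

Section multimeasure_null_sets.
Context {R : realType} {X : tvsType R} {d : measure_display} {T : measurableType d}.
Variables (M : set T -> set X).
Hypotheses (hX : hausdorff_space X) (Mm : multimeasure M).

Lemma mm_set0 : M set0 = [set 0].
Proof.
have [Mc Mf] := Mm; apply: supp_fun_eq0 => //; first by case: (Mc set0 measurable0).
by move=> f df; have [] := Mf f df.
Qed.

Lemma mm_null_bigcup (G : nat -> set T) : (forall n, null_sets M (G n)) ->
  trivIset setT G -> null_sets M (\bigcup_n G n).
Proof.
move=> G0 tG; have [Mc Mf] := Mm.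
have mG n : measurable (G n) by case: (G0 n).
have mU : measurable (\bigcup_n G n) by exact: bigcupT_measurable.
split => //; apply: supp_fun_eq0 => //; first by case: (Mc _ mU).
move=> f df; have [_ _ sa _] := Mf f df.
have := sa G mG tG mU.
have -> : (fun n => \sum_(0 <= i < n) supp_fun f (M (G i)))%E = fun _ => 0%E.
  by apply/funext => n; rewrite big1 // => i _; rewrite (G0 i).2 supp_fun_set0.
by move=> h; symmetry; apply: (cvg_unique (@ereal_hausdorff R) _ h); exact: cvg_cst.
Qed.

Lemma mm_null_setU (E1 E2 : set T) : null_sets M E1 -> null_sets M E2 ->
  E1 `&` E2 = set0 -> null_sets M (E1 `|` E2).
Proof.
move=> E10 E20 E12; rewrite -bigcup2E; apply: mm_null_bigcup.
  by case=> [|[|n]] //=; split => //; exact: mm_set0.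
by rewrite -trivIset_bigcup2.
Qed.

End multimeasure_null_sets.

Section disjoint_families.
Context {T : Type}.

Definition pairwise_disjoint (F : set (set T)) : Prop :=
  forall D E, F D -> F E -> D <> E -> D `&` E = set0.

Lemma maximal_disjoint_family (P : set (set T)) :
  exists F, [/\ F `<=` P, pairwise_disjoint F &
    forall E, P E -> (forall D, F D -> D `&` E = set0) -> F E].
Proof.
pose Q F := F `<=` P /\ pairwise_disjoint F.
have chainQ FF : FF `<=` Q -> total_on FF subset -> Q (\bigcup_(F in FF) F).
  move=> FFQ FFt; split => [E [F FFF FE]|]; first exact: (FFQ F FFF).1.
  move=> E1 E2 [F1 FF1 F1E] [F2 FF2 F2E] ne.
  have [s12|s21] := FFt _ _ FF1 FF2.
    exact: (FFQ F2 FF2).2 (s12 _ F1E) F2E ne.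
  exact: (FFQ F1 FF1).2 F1E (s21 _ F2E) ne.
have [F [[FP Fdis] Fmax]] := Zorn_bigcup chainQ.
exists F; split => // E PE dE; apply: contrapT => nFE.
apply: (Fmax (F `|` [set E])).
  by split => [D FD|sub]; [left | apply: nFE; apply: sub; right].
split => [D [/FP //|->//]|D1 D2 [F1|->] [F2|->] ne].
- exact: Fdis.
- exact: dE.
- by rewrite setIC; exact: dE.
- by [].
Qed.

Lemma disjoint_family_enum (F : set (set T)) : countable F -> pairwise_disjoint F ->
  exists S : nat -> set T, [/\ forall n, S n = set0 \/ F (S n),
    trivIset setT S & \bigcup_n S n = \bigcup_(E in F) E].
Proof.
move=> /countable_injP[g ginj] Fdis.
pose S n := \bigcup_(E in [set E | F E /\ g E = n]) E.
exists S; split.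
- move=> n; have [[E [FE gE]]|noE] := pselect (exists E, F E /\ g E = n).
    right; suff -> : S n = E by [].
    apply/seteqP; split => [p [E' [FE' gE'] E'p]|p Ep]; last by exists E.
    by rewrite -(ginj _ _ (mem_set FE') (mem_set FE)) ?gE ?gE'.
  by left; apply/seteqP; split => // p [E FE _]; apply: noE; exists E.
- move=> i j _ _ [p [[E [FE <-] Ep] [E' [FE' <-] E'p]]].
  have [->//|ne] := pselect (E = E').
  by have : (E `&` E') p by []; rewrite Fdis.
- apply/seteqP; split => [p [n _ [E [FE _] Ep]]|p [E FE Ep]]; first by exists E.
  by exists (g E) => //; exists E.
Qed.

End disjoint_families.

Lemma mm_null_family {R : realType} {X : tvsType R} {d : measure_display}
    {T : measurableType d} (M : set T -> set X) (F : set (set T)) :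
  hausdorff_space X -> multimeasure M -> countable F -> pairwise_disjoint F ->
  F `<=` null_sets M -> null_sets M (\bigcup_(E in F) E).
Proof.
move=> hX Mm cF Fdis F0.
have [S [SF tS <-]] := disjoint_family_enum cF Fdis.
apply: mm_null_bigcup => // n.
by case: (SF n) => [->|/F0//]; split => //; exact: mm_set0.
Qed.

Theorem lemma3p2 (R : realType) (X : tvsType R) (d : measure_display)
    (T : measurableType d) (M N : set T -> set X) :
  hausdorff_space X ->
  multimeasure M -> multimeasure N ->
  mabs_cont M N -> ccc N ->
  forall A : set T, measurable A -> ~ null_sets M A ->
  exists B : set T, [/\ measurable B, ~ null_sets M B, B `<=` A &
    forall E : set T, measurable E -> E `<=` B ->
      M E = [set 0%R] -> N E = [set 0%R]].
Proof.
move=> hX Mm Nm _ cN A mA nMA.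
pose bad E := [/\ measurable E, E `<=` A, M E = [set 0] & ~ null_sets N E].
have [F [Fbad Fdis Fmax]] := maximal_disjoint_family bad.
have cF : countable F by apply: cN Fdis => E /Fbad[].
pose E0 := \bigcup_(E in F) E.
have E0null : null_sets M E0 by apply: mm_null_family => // E /Fbad[].
have E0A : E0 `<=` A by move=> p [E /Fbad[_ EA _ _]]; exact: EA.
have mB : measurable (A `\` E0) by apply: measurableD => //; exact: E0null.1.
exists (A `\` E0); split => //.
  by move=> [_ MB]; apply: nMA; rewrite -(setDUK E0A); apply: mm_null_setU; rewrite ?setDIK.
move=> E mE EB ME; apply: contrapT => NE.
have FE : F E.
  apply: Fmax; first by split => // [p /EB[]|[]].
  by move=> D FD; apply/seteqP; split => // p [Dp /EB[_]]; apply; exists D.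
have E_empty : E = set0.
  by apply/seteqP; split => // p Ep; have [_] := EB p Ep; apply; exists E.
by apply: NE; rewrite E_empty; exact: (mm_set0 hX Nm).
Qed.
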